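(* With $x_0$, $u$, $R$ as in the kinematic equations (so $x(t)=R(t)x_0$), let $Y_0\in T_{x_0}S^m_1$ and $\Psi_0\in T^\perp_{x_0}S^m_1$. Then $Y(t)=R(t)Y_0$ is the unique tangent parallel vector field along $x(t)$ in $S^m_1$ with $Y(0)=Y_0$, and $\Psi(t)=R(t)\Psi_0$ is the unique normal parallel vector field along $x(t)$ with $\Psi(0)=\Psi_0$.
   Context: $\mathbb R^{m+1}_1$ is $\mathbb R^{m+1}$ with $\langle x,y\rangle_J=x^{\mathbf t}Jy$, $J=\mathrm{diag}(-1,I_m)$; $S^m_1=\{x:\langle x,x\rangle_J=1\}$, $T_{x}S^m_1=\{v:\langle v,x\rangle_J=0\}$, $T^\perp_xS^m_1=\mathrm{span}\{x\}$. $x_0\in S^m_1$, $u\colon[0,\tau]\to\mathbb R^{m+1}$ is absolutely continuous with $\langle u(t),x_0\rangle_J=0$, and $R$ is the absolutely continuous solution of $\dot R(t)=R(t)(u(t)x_0^{\mathbf t}-x_0u(t)^{\mathbf t})J$, $R(0)=I_{m+1}$. For a tangent field $Z$ along $x$ in $S^m_1$, $\frac{D}{dt}Z=\dot Z-\langle\dot Z,x\rangle_Jx$; for a normal field $\Psi$, $\frac{D^\perp}{dt}\Psi=\langle\dot\Psi,x\rangle_Jx$; parallel means the respective derivative vanishes a.e. *)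

From Stdlib Require Import Reals Lra.
Open Scope R_scope.

(* Vectors of R^{m+1} are functions nat -> R, only indices 0..m matter;
   (m+1)x(m+1) matrices are functions nat -> nat -> R. *)
Definition vec := nat -> R.
Definition mat := nat -> nat -> R.

Fixpoint fsum (n : nat) (g : nat -> R) : R :=
  match n with O => 0 | S n' => fsum n' g + g n' end.

Definition Jdiag (i : nat) : R := match i with O => -1 | S _ => 1 end.
Definition Jm : mat := fun i j => if Nat.eqb i j then Jdiag i else 0.
Definition idm : mat := fun i j => if Nat.eqb i j then 1 else 0.

Definition ip (m : nat) (x y : vec) : R :=
  sum_f_R0 (fun i => Jdiag i * x i * y i) m.

Definition mv (m : nat) (A : mat) (v : vec) : vec :=
  fun i => sum_f_R0 (fun k => A i k * v k) m.
Definition matmul (m : nat) (A B : mat) : mat :=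
  fun i j => sum_f_R0 (fun k => A i k * B k j) m.
Definition Kmat (u x0 : vec) : mat := fun i j => u i * x0 j - x0 i * u j.

(* absolute continuity on [a,b] (epsilon-delta, finite families of
   non-overlapping subintervals [s k, e k], listed in increasing order) *)
Definition abs_cont (a b : R) (f : R -> R) : Prop :=
  forall eps, 0 < eps -> exists delta, 0 < delta /\
    forall (n : nat) (s e : nat -> R),
      (forall k, (k < n)%nat -> a <= s k /\ s k <= e k /\ e k <= b) ->
      (forall k, (S k < n)%nat -> e k <= s (S k)) ->
      fsum n (fun k => e k - s k) < delta ->
      fsum n (fun k => Rabs (f (e k) - f (s k))) < eps.

Definition vabs_cont (m : nat) (a b : R) (f : R -> vec) : Prop :=
  forall i, (i <= m)%nat -> abs_cont a b (fun t => f t i).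
Definition mabs_cont (m : nat) (a b : R) (f : R -> mat) : Prop :=
  forall i j, (i <= m)%nat -> (j <= m)%nat -> abs_cont a b (fun t => f t i j).

Definition null_set (N : R -> Prop) : Prop :=
  forall eps, 0 < eps -> exists a b : nat -> R,
    (forall k, a k <= b k) /\
    (forall x, N x -> exists k, a k < x < b k) /\
    (forall n, fsum n (fun k => b k - a k) <= eps).

Definition ae_on (a b : R) (P : R -> Prop) : Prop :=
  exists N, null_set N /\ forall t, a <= t <= b -> ~ N t -> P t.

Definition has_vderiv (m : nat) (f : R -> vec) (t : R) (v : vec) : Prop :=
  forall i, (i <= m)%nat -> derivable_pt_lim (fun s => f s i) t (v i).

Definition tangent_parallel (m : nat) (tau : R) (x Z : R -> vec) : Prop :=
  vabs_cont m 0 tau Z /\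
  (forall t, 0 <= t <= tau -> ip m (Z t) (x t) = 0) /\
  ae_on 0 tau (fun t => exists v, has_vderiv m Z t v /\
     forall i, (i <= m)%nat -> v i - ip m v (x t) * x t i = 0).

Definition normal_parallel (m : nat) (tau : R) (x Psi : R -> vec) : Prop :=
  vabs_cont m 0 tau Psi /\
  (forall t, 0 <= t <= tau -> exists c, forall i, (i <= m)%nat -> Psi t i = c * x t i) /\
  ae_on 0 tau (fun t => exists v, has_vderiv m Psi t v /\
     forall i, (i <= m)%nat -> ip m v (x t) * x t i = 0).

From Stdlib Require Import Reals Lra Lia Classical FunctionalExtensionality.
From mathcomp Require all_boot all_algebra Rstruct.
Open Scope R_scope.

(** Vectors are columns and the Lorentz form is <p,q>_J = p^T J q.  The
    kinematic equation reads R' = R K J with the skew matrix K = u x0^T - x0 u^T,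
    and K J x0 = u because <x0,x0>_J = 1 and <u,x0>_J = 0.
    1. R J R^T has derivative R (K + K^T) R^T = 0 a.e., hence equals J
       throughout: every R(t) is a Lorentz transformation, R^T J R = J.
    2. Existence: (R Y0)' = R K J Y0 = -<u,Y0>_J x is normal, and for
       Psi0 = c x0, (R Psi0)' = c R u is tangent; so both fields are parallel.
    3. Uniqueness: for a tangent parallel Z the pulled-back field
       R^{-1} Z = J R^T J Z, and for a normal parallel Psi = c x the
       coefficient c = <Psi,x>_J, have zero derivative a.e., hence are constant.
    The analytic input is that an absolutely continuous function whose
    derivative vanishes off a null set is constant; it is proved first, over
    the standard reals and by Cousin's lemma. *)

Lemma fsum_ext n g h : (forall k, (k < n)%nat -> g k = h k) -> fsum n g = fsum n h.
Proof.
  induction n; intros H; simpl; [reflexivity|].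
  rewrite IHn, H by (intros; try apply H; lia). reflexivity.
Qed.

Lemma fsum_le n g h : (forall k, (k < n)%nat -> g k <= h k) -> fsum n g <= fsum n h.
Proof.
  induction n; intros H; simpl; [lra|].
  assert (fsum n g <= fsum n h) by (apply IHn; intros; apply H; lia).
  assert (g n <= h n) by (apply H; lia). lra.
Qed.

Lemma fsum_plus n g h : fsum n (fun k => g k + h k) = fsum n g + fsum n h.
Proof. induction n; simpl; [lra|]. rewrite IHn. lra. Qed.

Lemma fsum_minus n g h : fsum n (fun k => g k - h k) = fsum n g - fsum n h.
Proof. induction n; simpl; [lra|]. rewrite IHn. lra. Qed.

Lemma fsum_scal n c g : fsum n (fun k => c * g k) = c * fsum n g.
Proof. induction n; simpl; [lra|]. rewrite IHn. lra. Qed.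

Lemma fsum_zero n : fsum n (fun _ => 0) = 0.
Proof. induction n; simpl; [lra|]. rewrite IHn; lra. Qed.

Lemma fsum_nonneg n g : (forall k, (k < n)%nat -> 0 <= g k) -> 0 <= fsum n g.
Proof. intros H. rewrite <- (fsum_zero n). apply fsum_le; auto. Qed.

Lemma fsum_single n g j :
  (forall k, (k < n)%nat -> 0 <= g k) -> (j < n)%nat -> g j <= fsum n g.
Proof.
  induction n; intros H Hj; [lia|]. simpl.
  destruct (Nat.eq_dec j n) as [->|Hne].
  - assert (0 <= fsum n g) by (apply fsum_nonneg; intros; apply H; lia). lra.
  - assert (g j <= fsum n g) by (apply IHn; [intros; apply H; lia| lia]).
    assert (0 <= g n) by (apply H; lia). lra.
Qed.

Lemma fsum_mono_n n p g : (n <= p)%nat -> (forall k, 0 <= g k) -> fsum n g <= fsum p g.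
Proof. intros H Hg. induction H; simpl; [lra|]. specialize (Hg m). lra. Qed.

Lemma fsum_interleave n h1 h2 :
  fsum (2 * n) (fun k => if Nat.even k then h1 (Nat.div2 k) else h2 (Nat.div2 k))
  = fsum n h1 + fsum n h2.
Proof.
  induction n; [simpl; lra|].
  replace (2 * S n)%nat with (S (S (2 * n))) by lia. cbn [fsum]. rewrite IHn.
  assert (E1 : Nat.even (2 * n) = true) by (apply Nat.even_spec; exists n; lia).
  assert (E2 : Nat.even (S (2 * n)) = false)
    by (rewrite Nat.even_succ, <- Nat.negb_even, E1; reflexivity).
  rewrite E1, E2, Nat.div2_double, Nat.div2_succ_double. lra.
Qed.

(** Cousin's lemma: for every gauge on [a,b] there is a chain of
    [Q]-steps from [a] to [b], where [Q x y] is granted whenever [x <= t <= y]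
    lie in the gauge neighbourhood of the tag [t].  This replaces compactness
    arguments below. *)

Inductive chain (Q : R -> R -> Prop) (a : R) : R -> Prop :=
| chain_refl : chain Q a a
| chain_step : forall y z, chain Q a y -> Q y z -> chain Q a z.

Lemma cousin (a b : R) (Q : R -> R -> Prop) : a <= b ->
  (forall t, a <= t <= b -> exists d, 0 < d /\ forall x y, a <= x -> y <= b ->
      t - d < x <= t -> t <= y < t + d -> Q x y) -> chain Q a b.
Proof.
  intros Hab Hg.
  set (S := fun s => a <= s <= b /\ chain Q a s).
  assert (Hb : bound S) by (exists b; intros s [Hs _]; lra).
  assert (Hne : exists s, S s) by (exists a; split; [lra| constructor]).
  destruct (completeness S Hb Hne) as [c [Hub Hlub]].
  assert (Hac : a <= c) by (apply Hub; split; [lra|constructor]).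
  assert (Hcb : c <= b) by (apply Hlub; intros s [Hs _]; lra).
  destruct (Hg c (conj Hac Hcb)) as [d [Hd Hq]].
  assert (Hex : exists s, S s /\ c - d < s).
  { destruct (classic (exists s, S s /\ c - d < s)) as [H|H]; auto.
    exfalso. assert (c <= c - d); [|lra]. apply Hlub. intros s Hs.
    destruct (Rle_lt_dec s (c - d)); auto. exfalso; apply H; eauto. }
  destruct Hex as [s [[Hs1 Hs2] Hs3]].
  assert (Hsc : s <= c) by (apply Hub; split; auto).
  assert (Hchc : chain Q a c) by (apply chain_step with s; auto; apply Hq; lra).
  destruct (Req_dec c b) as [<-|Hne']; auto.
  (* otherwise the chain extends beyond the supremum *)
  exfalso. set (y := Rmin b (c + d / 2)).
  assert (Hy1 : c < y) by (unfold y; apply Rmin_glb_lt; lra).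
  assert (Hy2 : y <= b) by apply Rmin_l.
  assert (Hy3 : y <= c + d / 2) by apply Rmin_r.
  assert (S y) by (split; [lra|]; apply chain_step with c; auto; apply Hq; lra).
  assert (y <= c) by (apply Hub; auto). lra.
Qed.

Lemma ac_const a b c : abs_cont a b (fun _ => c).
Proof.
  intros eps He. exists 1. split; [lra|]. intros n s e _ _ _.
  rewrite (fsum_ext n _ (fun _ => 0)), fsum_zero; [lra|].
  intros. unfold Rminus. rewrite Rplus_opp_r, Rabs_R0. reflexivity.
Qed.

Lemma ac_plus a b f g :
  abs_cont a b f -> abs_cont a b g -> abs_cont a b (fun t => f t + g t).
Proof.
  intros Hf Hg eps He.
  destruct (Hf (eps / 2)) as [d1 [Hd1 H1]]; [lra|].
  destruct (Hg (eps / 2)) as [d2 [Hd2 H2]]; [lra|].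
  exists (Rmin d1 d2). split; [apply Rmin_pos; auto|]. intros n s e Hs Ho Hl.
  pose proof (Rmin_l d1 d2). pose proof (Rmin_r d1 d2).
  assert (A1 := H1 n s e Hs Ho ltac:(lra)). assert (A2 := H2 n s e Hs Ho ltac:(lra)).
  eapply Rle_lt_trans with
    (fsum n (fun k => Rabs (f (e k) - f (s k)) + Rabs (g (e k) - g (s k)))).
  - apply fsum_le. intros k _.
    replace (f (e k) + g (e k) - (f (s k) + g (s k)))
      with ((f (e k) - f (s k)) + (g (e k) - g (s k))) by ring.
    apply Rabs_triang.
  - rewrite fsum_plus. lra.
Qed.

Lemma ac_restrict a b c f : abs_cont a b f -> c <= b -> abs_cont a c f.
Proof.
  intros H Hc eps He. destruct (H eps He) as [d [Hd Hd']]. exists d. split; auto.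
  intros n s e Hs Ho Hl. apply Hd'; auto. intros k Hk. specialize (Hs k Hk). lra.
Qed.

(* Absolutely continuous functions are bounded (Cousin with oscillation 1). *)
Lemma ac_bounded a b f :
  a <= b -> abs_cont a b f -> exists M, forall t, a <= t <= b -> Rabs (f t) <= M.
Proof.
  intros Hab Hf. destruct (Hf 1) as [d [Hd H]]; [lra|].
  set (Q := fun x y => x <= y /\ forall s, x <= s <= y -> Rabs (f s - f x) <= 1).
  assert (Hc : chain Q a b).
  { apply cousin; auto. intros t Ht. exists (d / 2). split; [lra|].
    intros x y Hx Hy Hx1 Hy1. split; [lra|]. intros s Hs.
    assert (Hfam := H 1%nat (fun _ => x) (fun _ => s)).
    simpl in Hfam. rewrite !Rplus_0_l in Hfam. left. apply Hfam; intros; lra || lia. }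
  assert (Hbd : forall z, chain Q a z ->
            a <= z /\ exists M, forall t, a <= t <= z -> Rabs (f t) <= M).
  { intros z Hz. induction Hz as [|y z Hy [Hay [M HM]] [Hyz Hq]].
    - split; [lra|]. exists (Rabs (f a)). intros t Ht. replace t with a by lra. lra.
    - split; [lra|]. exists (M + 1). intros t Ht. destruct (Rle_lt_dec t y).
      + specialize (HM t ltac:(lra)). lra.
      + specialize (Hq t ltac:(lra)). specialize (HM y ltac:(lra)).
        pose proof (Rabs_triang (f t - f y) (f y)).
        replace (f t - f y + f y) with (f t) in H0 by ring. lra. }
  destruct (Hbd b Hc) as [_ [M HM]]. exists M. exact HM.
Qed.

(* Products, using the boundedness of both factors. *)
Lemma ac_mult a b f g :
  a <= b -> abs_cont a b f -> abs_cont a b g -> abs_cont a b (fun t => f t * g t).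
Proof.
  intros Hab Hf Hg.
  destruct (ac_bounded a b f Hab Hf) as [M1 HM1].
  destruct (ac_bounded a b g Hab Hg) as [M2 HM2].
  set (A := Rabs M1 + 1). set (B := Rabs M2 + 1).
  assert (HA : 0 < A) by (unfold A; pose proof (Rabs_pos M1); lra).
  assert (HB : 0 < B) by (unfold B; pose proof (Rabs_pos M2); lra).
  intros eps He.
  destruct (Hg (eps / (2 * A))) as [d1 [Hd1 H1]]; [apply Rdiv_lt_0_compat; lra|].
  destruct (Hf (eps / (2 * B))) as [d2 [Hd2 H2]]; [apply Rdiv_lt_0_compat; lra|].
  exists (Rmin d1 d2). split; [apply Rmin_pos; auto|]. intros n s e Hs Ho Hl.
  pose proof (Rmin_l d1 d2). pose proof (Rmin_r d1 d2).
  assert (A1 := H1 n s e Hs Ho ltac:(lra)). assert (A2 := H2 n s e Hs Ho ltac:(lra)).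
  (* f g (e) - f g (s) = f(e) (g(e) - g(s)) + g(s) (f(e) - f(s)) *)
  eapply Rle_lt_trans with (fsum n (fun k =>
    A * Rabs (g (e k) - g (s k)) + B * Rabs (f (e k) - f (s k)))).
  - apply fsum_le. intros k Hk. specialize (Hs k Hk).
    replace (f (e k) * g (e k) - f (s k) * g (s k))
      with (f (e k) * (g (e k) - g (s k)) + g (s k) * (f (e k) - f (s k))) by ring.
    eapply Rle_trans; [apply Rabs_triang|]. rewrite !Rabs_mult.
    assert (Rabs (f (e k)) <= A)
      by (specialize (HM1 (e k) ltac:(lra)); unfold A; pose proof (Rle_abs M1); lra).
    assert (Rabs (g (s k)) <= B)
      by (specialize (HM2 (s k) ltac:(lra)); unfold B; pose proof (Rle_abs M2); lra).
    apply Rplus_le_compat; apply Rmult_le_compat_r; auto using Rabs_pos.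
  - rewrite fsum_plus, !fsum_scal.
    assert (A * fsum n (fun k => Rabs (g (e k) - g (s k))) < eps / 2).
    { replace (eps / 2) with (A * (eps / (2 * A))) by (field; lra).
      apply Rmult_lt_compat_l; auto. }
    assert (B * fsum n (fun k => Rabs (f (e k) - f (s k))) < eps / 2).
    { replace (eps / 2) with (B * (eps / (2 * B))) by (field; lra).
      apply Rmult_lt_compat_l; auto. }
    lra.
Qed.

Lemma null_union N1 N2 : null_set N1 -> null_set N2 -> null_set (fun t => N1 t \/ N2 t).
Proof.
  intros H1 H2 eps He.
  destruct (H1 (eps / 2)) as [a1 [b1 [Hab1 [Hc1 Hs1]]]]; [lra|].
  destruct (H2 (eps / 2)) as [a2 [b2 [Hab2 [Hc2 Hs2]]]]; [lra|].
  (* interleave the two covers *)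
  exists (fun k => if Nat.even k then a1 (Nat.div2 k) else a2 (Nat.div2 k)).
  exists (fun k => if Nat.even k then b1 (Nat.div2 k) else b2 (Nat.div2 k)).
  split; [intros k; destruct (Nat.even k); auto|]. split.
  - intros x [Hx|Hx].
    + destruct (Hc1 x Hx) as [k Hk]. exists (2 * k)%nat.
      rewrite Nat.even_mul, Nat.div2_double. simpl. auto.
    + destruct (Hc2 x Hx) as [k Hk]. exists (S (2 * k))%nat.
      rewrite Nat.even_succ, Nat.odd_mul, Nat.div2_succ_double. simpl. auto.
  - intros n. eapply Rle_trans; [apply (fsum_mono_n n (2 * n)); [lia|]|].
    + intros k. destruct (Nat.even k);
        [specialize (Hab1 (Nat.div2 k))|specialize (Hab2 (Nat.div2 k))]; lra.
    + erewrite fsum_ext.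
      * rewrite (fsum_interleave n (fun j => b1 j - a1 j) (fun j => b2 j - a2 j)).
        specialize (Hs1 n). specialize (Hs2 n). lra.
      * intros k _. simpl. destruct (Nat.even k); reflexivity.
Qed.

Lemma null_pts p q : null_set (fun t => t = p \/ t = q).
Proof.
  intros eps He.
  exists (fun k => match k with O => p - eps / 4 | S O => q - eps / 4 | _ => 0 end).
  exists (fun k => match k with O => p + eps / 4 | S O => q + eps / 4 | _ => 0 end).
  split; [intros [|[|k]]; lra|]. split.
  - intros x [->| ->]; [exists 0%nat| exists 1%nat]; lra.
  - assert (Htail : forall n, fsum (S (S n)) (fun k =>
        match k with O => p + eps / 4 | S O => q + eps / 4 | _ => 0 end -
        match k with O => p - eps / 4 | S O => q - eps / 4 | _ => 0 end) = eps).
    { induction n as [|n IH]; [simpl; lra|]. cbn [fsum] in *. rewrite IH. lra. }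
    intros [|[|n]]; [simpl; lra|simpl; lra|]. rewrite Htail. lra.
Qed.

Lemma small_zero D C : 0 < C -> (forall eps, 0 < eps -> Rabs D <= eps * C) -> D = 0.
Proof.
  intros HC H. destruct (Req_dec D 0) as [|Hne]; auto. exfalso.
  assert (HD : 0 < Rabs D) by (apply Rabs_pos_lt; auto).
  specialize (H (Rabs D / (2 * C)) ltac:(apply Rdiv_lt_0_compat; lra)).
  replace (Rabs D / (2 * C) * C) with (Rabs D / 2) in H by (field; lra). lra.
Qed.

Lemma deriv0_bound f t eps : derivable_pt_lim f t 0 -> 0 < eps ->
  exists d, 0 < d /\ forall s, Rabs (s - t) < d -> Rabs (f s - f t) <= eps * Rabs (s - t).
Proof.
  intros H He. destruct (H eps He) as [d Hd]. exists d. split; [apply cond_pos|].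
  intros s Hs. destruct (Req_dec s t) as [->|Hne].
  - unfold Rminus. rewrite !Rplus_opp_r, Rabs_R0. lra.
  - specialize (Hd (s - t) ltac:(lra) Hs). replace (t + (s - t)) with s in Hd by ring.
    rewrite Rminus_0_r in Hd. unfold Rdiv in Hd. rewrite Rabs_mult, Rabs_inv in Hd.
    assert (0 < Rabs (s - t)) by (apply Rabs_pos_lt; lra).
    apply Rmult_lt_compat_r with (r := Rabs (s - t)) in Hd; auto.
    rewrite Rmult_assoc, Rinv_l in Hd by lra. lra.
Qed.

Lemma deriv_vanish f t L a b :
  derivable_pt_lim f t L -> (forall s, a <= s <= b -> f s = 0) -> a < t < b -> L = 0.
Proof.
  intros H Hz Ht.
  apply (uniqueness_limite (fun _ => 0) t); [|apply derivable_pt_lim_const].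
  apply (derivable_pt_lim_locally_ext f _ t a b); auto.
  intros z Hzab. apply Hz. lra.
Qed.

(** Given eps, cover the exceptional set by intervals of
    small total length; Cousin's lemma splits [a,b] into steps that are
    either eps-Lipschitz for [f] or lie inside one covering interval.  The
    latter steps have small total length, so absolute continuity controls
    the variation of [f] on them. *)

Lemma clamp_mono (p q x y : R) : x <= y -> Rmax p (Rmin q x) <= Rmax p (Rmin q y).
Proof. intros H. unfold Rmax, Rmin. repeat destruct Rle_dec; lra. Qed.

Lemma telescope (phi : R -> R) a b n s e :
  (forall x y, x <= y -> phi x <= phi y) ->
  (forall k, (k < n)%nat -> a <= s k /\ s k <= e k /\ e k <= b) ->
  (forall k, (S k < n)%nat -> e k <= s (S k)) ->
  a <= b -> fsum n (fun k => phi (e k) - phi (s k)) <= phi b - phi a.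
Proof.
  intros Hm Hs Ho Hab. destruct n as [|n]; [simpl; assert (phi a <= phi b) by auto; lra|].
  assert (Hp : forall p, (p <= n)%nat ->
            fsum (S p) (fun k => phi (e k) - phi (s k)) <= phi (e p) - phi a).
  { induction p; intros Hp.
    - simpl. specialize (Hs 0%nat ltac:(lia)).
      assert (phi a <= phi (s 0%nat)) by (apply Hm; lra). lra.
    - cbn [fsum] in *. specialize (IHp ltac:(lia)).
      assert (phi (e p) <= phi (s (S p))) by (apply Hm; apply Ho; lia). lra. }
  specialize (Hp n (le_n n)). specialize (Hs n ltac:(lia)).
  assert (phi (e n) <= phi b) by (apply Hm; lra). lra.
Qed.

Lemma covered_length a b (ak bk : nat -> R) K n (s e : nat -> R) (J : nat -> nat) :
  a <= b -> (forall j, ak j <= bk j) ->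
  (forall k, (k < n)%nat -> a <= s k /\ s k <= e k /\ e k <= b) ->
  (forall k, (S k < n)%nat -> e k <= s (S k)) ->
  (forall k, (k < n)%nat -> (J k < K)%nat /\ ak (J k) <= s k /\ e k <= bk (J k)) ->
  fsum n (fun k => e k - s k) <= fsum K (fun j => bk j - ak j).
Proof.
  intros Hab Hakb Hs Ho HJ.
  (* phi x = total length of the parts of the covering intervals left of x *)
  set (phi := fun x => fsum K (fun j => Rmax (ak j) (Rmin (bk j) x) - ak j)).
  assert (Hphim : forall x y, x <= y -> phi x <= phi y).
  { intros x y Hxy. unfold phi. apply fsum_le. intros j _.
    pose proof (clamp_mono (ak j) (bk j) x y Hxy). lra. }
  apply Rle_trans with (fsum n (fun k => phi (e k) - phi (s k))).
  - apply fsum_le. intros k Hk. unfold phi. rewrite <- fsum_minus.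
    destruct (HJ k Hk) as [HJK HJk]. specialize (Hs k Hk).
    eapply Rle_trans; [|apply (fsum_single K _ (J k)); auto].
    + unfold Rmax, Rmin. repeat destruct Rle_dec; lra.
    + intros j _. pose proof (clamp_mono (ak j) (bk j) (s k) (e k) ltac:(lra)). lra.
  - eapply Rle_trans; [apply (telescope phi a b); auto|].
    unfold phi. rewrite <- fsum_minus. apply fsum_le.
    intros j _. specialize (Hakb j). unfold Rmax, Rmin. repeat destruct Rle_dec; lra.
Qed.

Definition fine_step (f : R -> R) (eps : R) (ak bk : nat -> R) (x y : R) : Prop :=
  x <= y /\ (Rabs (f y - f x) <= eps * (y - x) \/ exists j, ak j <= x /\ y <= bk j).

Lemma fine_chain_exists a b f eps (ak bk : nat -> R) (N : R -> Prop) :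
  a <= b -> 0 < eps ->
  (forall x, N x -> exists j, ak j < x < bk j) ->
  (forall t, a <= t <= b -> ~ N t -> derivable_pt_lim f t 0) ->
  chain (fine_step f eps ak bk) a b.
Proof.
  intros Hab He Hcov Hd. apply cousin; auto. intros t Ht.
  destruct (classic (N t)) as [Hn|Hn].
  - destruct (Hcov t Hn) as [j Hj]. exists (Rmin (t - ak j) (bk j - t)).
    split; [apply Rmin_pos; lra|]. intros x y _ _ Hx Hy.
    pose proof (Rmin_l (t - ak j) (bk j - t)). pose proof (Rmin_r (t - ak j) (bk j - t)).
    split; [lra|]. right. exists j. lra.
  - destruct (deriv0_bound f t eps (Hd t Ht Hn) He) as [d [Hd0 Hdb]].
    exists d. split; auto. intros x y _ _ Hx Hy. split; [lra|]. left.
    pose proof (Hdb y ltac:(rewrite Rabs_right; lra)) as Hy'.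
    pose proof (Hdb x ltac:(rewrite Rabs_left1; lra)) as Hx'.
    rewrite (Rabs_right (y - t)) in Hy' by lra. rewrite (Rabs_left1 (x - t)) in Hx' by lra.
    rewrite Rabs_minus_sym in Hx'.
    pose proof (Rabs_triang (f y - f t) (f t - f x)) as Htr.
    replace (f y - f t + (f t - f x)) with (f y - f x) in Htr by ring. lra.
Qed.

Lemma fine_chain_estimate f eps (ak bk : nat -> R) a z :
  0 < eps -> chain (fine_step f eps ak bk) a z ->
  a <= z /\ exists n s e (J : nat -> nat),
    (forall k, (k < n)%nat -> a <= s k /\ s k <= e k /\ e k <= z) /\
    (forall k, (S k < n)%nat -> e k <= s (S k)) /\
    (forall k, (k < n)%nat -> ak (J k) <= s k /\ e k <= bk (J k)) /\
    Rabs (f z - f a) <= eps * (z - a) + fsum n (fun k => Rabs (f (e k) - f (s k))).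
Proof.
  intros He Hz. induction Hz as [|y z Hy [Hay [n [s [e [J [H1 [H2 [H3 H4]]]]]]]] [Hyz Hq]].
  - split; [lra|]. exists 0%nat, (fun _ => a), (fun _ => a), (fun _ => 0%nat).
    split; [intros; lia|]. split; [intros; lia|]. split; [intros; lia|].
    simpl. unfold Rminus. rewrite Rplus_opp_r, Rabs_R0. lra.
  - split; [lra|].
    pose proof (Rabs_triang (f z - f y) (f y - f a)) as Htr.
    replace (f z - f y + (f y - f a)) with (f z - f a) in Htr by ring.
    destruct Hq as [Hq|[j Hj]].
    + exists n, s, e, J. split; [intros k Hk; specialize (H1 k Hk); lra|].
      split; [exact H2|]. split; [exact H3|]. lra.
    +
      exists (S n), (fun k => if Nat.eqb k n then y else s k),
        (fun k => if Nat.eqb k n then z else e k), (fun k => if Nat.eqb k n then j else J k).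
      split; [|split; [|split]].
      * intros k Hk. destruct (Nat.eqb_spec k n); [lra|]. specialize (H1 k ltac:(lia)). lra.
      * intros k Hk. destruct (Nat.eqb_spec k n); [lia|]. destruct (Nat.eqb_spec (S k) n).
        -- subst n. specialize (H1 k ltac:(lia)). lra.
        -- apply H2; lia.
      * intros k Hk. destruct (Nat.eqb_spec k n); [lra|]. apply H3; lia.
      * cbn [fsum]. rewrite Nat.eqb_refl.
        rewrite (fsum_ext n _ (fun k => Rabs (f (e k) - f (s k)))).
        -- pose proof (Rabs_pos (f z - f y)).
           assert (eps * (y - a) <= eps * (z - a)) by (apply Rmult_le_compat_l; lra). lra.
        -- intros k Hk. destruct (Nat.eqb_spec k n); [lia|reflexivity].
Qed.

Lemma nat_fun_bounded (J : nat -> nat) n : exists K, forall k, (k < n)%nat -> (J k < K)%nat.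
Proof.
  induction n as [|n [K HK]]; [exists 0%nat; intros; lia|].
  exists (S (Nat.max K (J n))). intros k Hk.
  destruct (Nat.eq_dec k n); [subst; lia|]. specialize (HK k ltac:(lia)). lia.
Qed.

(* The constancy theorem; the endpoints are thrown into the exceptional set
   so that Cousin's lemma may be applied on the closed interval. *)
Lemma ac_deriv0 a b f N : a <= b -> abs_cont a b f -> null_set N ->
  (forall t, a < t < b -> ~ N t -> derivable_pt_lim f t 0) -> f b = f a.
Proof.
  intros Hab Hf HN Hd.
  cut (f b - f a = 0); [lra|].
  apply (small_zero (f b - f a) (b - a + 1)); [lra|]. intros eps He.
  destruct (Hf eps He) as [del [Hdel Hac]].
  set (N' := fun t => N t \/ (t = a \/ t = b)).
  assert (HN' : null_set N') by (apply null_union; auto; apply null_pts).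
  destruct (HN' (del / 2)) as [ak [bk [Hakb [Hcov Hsum]]]]; [lra|].
  assert (Hch : chain (fine_step f eps ak bk) a b).
  { apply (fine_chain_exists a b f eps ak bk N'); auto.
    intros t Ht Hn. apply Hd; [|intro; apply Hn; left; auto].
    unfold N' in Hn. split; apply Rnot_le_lt; intro; apply Hn; right; lra. }
  destruct (fine_chain_estimate f eps ak bk a b He Hch)
    as [_ [n [s [e [J [H1 [H2 [H3 H4]]]]]]]].
  destruct (nat_fun_bounded J n) as [K HK].
  assert (Hlen : fsum n (fun k => e k - s k) <= del / 2).
  { eapply Rle_trans; [apply (covered_length a b ak bk K n s e J)|apply Hsum]; auto. }
  assert (fsum n (fun k => Rabs (f (e k) - f (s k))) < eps) by (apply Hac; auto; lra).
  lra.
Qed.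

Lemma ac_deriv0_on tau f N : 0 <= tau -> abs_cont 0 tau f -> null_set N ->
  (forall t, 0 < t < tau -> ~ N t -> derivable_pt_lim f t 0) ->
  forall t, 0 <= t <= tau -> f t = f 0.
Proof.
  intros Htau Hf HN Hd t Ht. apply (ac_deriv0 0 t f N); [lra| |auto|].
  - apply ac_restrict with tau; [auto|lra].
  - intros s Hs HNs. apply Hd; auto; lra.
Qed.

Lemma unit_scal_zero m (y : vec) c :
  ip m y y = 1 -> (forall i, (i <= m)%nat -> c * y i = 0) -> c = 0.
Proof.
  intros Hy Hc. destruct (Req_dec c 0) as [|Hne]; auto. exfalso.
  assert (ip m y y = 0); [|lra].
  apply sum_eq_R0. intros k Hk.
  destruct (Rmult_integral _ _ (Hc k Hk)) as [H0|H0]; [contradiction|rewrite H0; ring].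
Qed.

Module MatrixCalculus.
Import all_boot all_algebra Rstruct.
Import GRing.Theory.
Set Implicit Arguments. Unset Strict Implicit.

Definition cv m (v : vec) : 'cV[R]_m.+1 := (\col_(i < m.+1) v i)%R.
Definition mx m (A : mat) : 'M[R]_m.+1 := (\matrix_(i < m.+1, j < m.+1) A i j)%R.

Lemma ord_le m (i : 'I_m.+1) : (i <= m)%coq_nat.
Proof. by apply/leP; rewrite -ltnS. Qed.

Lemma sum_f_R0E f m : sum_f_R0 f m = (\sum_(i < m.+1) f i)%R.
Proof. by elim: m => [|m IH] /=; rewrite ?big_ord1 // big_ord_recr /= IH. Qed.

Lemma cv_entry m v i : (i <= m)%coq_nat -> cv m v (inord i) ord0 = v i.
Proof. by move/leP => h; rewrite mxE inordK. Qed.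

Lemma cv_inord m (M : 'cV[R]_m.+1) : cv m (fun i => M (inord i) ord0) = M.
Proof. by apply/matrixP => i j; rewrite mxE inord_val (ord1 j). Qed.

Lemma cv_mv m A v : cv m (mv m A v) = (mx m A *m cv m v)%R.
Proof.
by apply/matrixP => i j; rewrite !mxE /mv sum_f_R0E; apply: eq_bigr => k _; rewrite !mxE.
Qed.

Lemma mv_entry m A v i : (i <= m)%coq_nat -> mv m A v i = (mx m A *m cv m v)%R (inord i) ord0.
Proof. by move=> h; rewrite -cv_mv cv_entry. Qed.

Lemma cv_scal m (w y : vec) c :
  (forall i, (i <= m)%coq_nat -> w i = c * y i) -> cv m w = (c *: cv m y)%R.
Proof. by move=> h; apply/matrixP => i j; rewrite !mxE h //; apply: ord_le. Qed.

Lemma mx_matmul m A B : mx m (matmul m A B) = (mx m A *m mx m B)%R.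
Proof.
by apply/matrixP => i j; rewrite !mxE /matmul sum_f_R0E; apply: eq_bigr => k _; rewrite !mxE.
Qed.

Lemma mx_Kmat m a b : mx m (Kmat a b) = (cv m a *m (cv m b)^T - cv m b *m (cv m a)^T)%R.
Proof. by apply/matrixP => i j; rewrite !mxE !big_ord1 !mxE. Qed.

Lemma mx_idm m : mx m idm = 1%:M%R.
Proof.
apply/matrixP => i j; rewrite !mxE /idm.
case: (Nat.eqb_spec i j) => [/val_inj -> | ne]; first by rewrite eqxx.
by case: eqP => // e; case: ne; rewrite e.
Qed.

Lemma Jm_neq (i j : nat) : i <> j -> Jm i j = 0.
Proof. by move=> /Nat.eqb_neq ne; rewrite /Jm ne. Qed.

Lemma Jm_diag (i : nat) : Jm i i = Jdiag i.
Proof. by rewrite /Jm Nat.eqb_refl. Qed.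

Lemma ipE m x y : ip m x y = (((cv m x)^T *m mx m Jm *m cv m y) ord0 ord0)%R.
Proof.
rewrite /ip sum_f_R0E !mxE; apply: eq_bigr => i _.
rewrite !mxE (bigD1 i) //= big1 ?addr0; first by rewrite !mxE Jm_diag -!RmultE; ring.
move=> j ji; rewrite !mxE Jm_neq ?mulr0 //.
by move=> /val_inj e; move: ji; rewrite e eqxx.
Qed.

Lemma Jtr m : ((mx m Jm)^T = mx m Jm)%R.
Proof.
apply/matrixP => i j; rewrite !mxE.
case: (Nat.eqb_spec i j) => [/val_inj -> // | ne].
by rewrite !Jm_neq //; apply: nesym.
Qed.

Lemma JJ m : (mx m Jm *m mx m Jm = 1%:M)%R.
Proof.
apply/matrixP => i j; rewrite !mxE (bigD1 i) //= big1 ?addr0.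
  rewrite !mxE Jm_diag; case: (Nat.eqb_spec i j) => [/val_inj -> | ne].
    rewrite Jm_diag eqxx mulr1n; case: (nat_of_ord j) => [|k] /=; rewrite -RmultE -?R1E; lra.
  rewrite Jm_neq // mulr0; by case: eqP => // e; case: ne; rewrite e.
move=> k ki; rewrite !mxE Jm_neq ?mul0r //.
by move=> /val_inj e; move: ki; rewrite e eqxx.
Qed.

Lemma ipJ_sym m (p q : 'cV[R]_m.+1) :
  (p^T *m mx m Jm *m q = q^T *m mx m Jm *m p)%R.
Proof.
have tr11 (M : 'M[R]_1) : (M^T = M)%R by apply/matrixP => i j; rewrite !ord1 mxE.
by rewrite -[LHS]tr11 !trmx_mul trmxK Jtr mulmxA.
Qed.

Definition mderiv p q (A : R -> 'M[R]_(p,q)) t (D : 'M[R]_(p,q)) :=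
  forall i j, derivable_pt_lim (fun s => A s i j) t (D i j).
Definition mac p q a b (A : R -> 'M[R]_(p,q)) := forall i j, abs_cont a b (fun s => A s i j).

Lemma deriv_big (I : Type) (r : seq I) (F : I -> R -> R) (F' : I -> R) t :
  (forall k, derivable_pt_lim (F k) t (F' k)) ->
  derivable_pt_lim (fun s => \sum_(k <- r) F k s)%R t (\sum_(k <- r) F' k)%R.
Proof.
elim: r => [|k r IH] H.
  rewrite big_nil; apply: (derivable_pt_lim_ext (fun _ => 0)).
    by move=> s; rewrite big_nil.
  exact: derivable_pt_lim_const.
rewrite big_cons; apply: (derivable_pt_lim_ext (fun s => F k s + \sum_(j <- r) F j s)%R).
  by move=> s; rewrite big_cons.
exact: derivable_pt_lim_plus (H k) (IH H).
Qed.

Lemma ac_big (I : Type) (r : seq I) (F : I -> R -> R) a b :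
  (forall k, abs_cont a b (F k)) -> abs_cont a b (fun s => \sum_(k <- r) F k s)%R.
Proof.
elim: r => [|k r IH] H.
  have -> : (fun s => \sum_(k <- [::]) F k s)%R = (fun _ => 0).
    by apply: functional_extensionality => s; rewrite big_nil.
  exact: ac_const.
have -> : (fun s => \sum_(j <- k :: r) F j s)%R = (fun s => F k s + \sum_(j <- r) F j s)%R.
  by apply: functional_extensionality => s; rewrite big_cons.
exact: ac_plus (H k) (IH H).
Qed.

Lemma mderiv_mul p q r (A : R -> 'M[R]_(p,q)) (B : R -> 'M[R]_(q,r)) t DA DB :
  mderiv A t DA -> mderiv B t DB ->
  mderiv (fun s => A s *m B s)%R t (DA *m B t + A t *m DB)%R.
Proof.
move=> HA HB i j.
apply: (derivable_pt_lim_ext (fun s => \sum_k (A s i k * B s k j))%R).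
  by move=> s; rewrite mxE.
rewrite !mxE -big_split; apply: deriv_big => k.
exact: derivable_pt_lim_mult (HA i k) (HB k j).
Qed.

Lemma mderiv_const p q (C : 'M[R]_(p,q)) t : mderiv (fun _ => C) t 0%R.
Proof. by move=> i j; rewrite mxE; apply: derivable_pt_lim_const. Qed.

Lemma mderiv_tr p q (A : R -> 'M[R]_(p,q)) t D :
  mderiv A t D -> mderiv (fun s => (A s)^T)%R t D^T%R.
Proof.
move=> H i j; apply: (derivable_pt_lim_ext (fun s => A s j i)).
  by move=> s; rewrite mxE.
by rewrite mxE; apply: H.
Qed.

Lemma mac_mul p q r a b (A : R -> 'M[R]_(p,q)) (B : R -> 'M[R]_(q,r)) :
  a <= b -> mac a b A -> mac a b B -> mac a b (fun s => A s *m B s)%R.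
Proof.
move=> hab HA HB i j.
have -> : (fun s => (A s *m B s)%R i j) = (fun s => \sum_k (A s i k * B s k j))%R.
  by apply: functional_extensionality => s; rewrite mxE.
by apply: ac_big => k; apply: ac_mult.
Qed.

Lemma mac_const p q a b (C : 'M[R]_(p,q)) : mac a b (fun _ => C).
Proof. by move=> i j; apply: ac_const. Qed.

Lemma mac_tr p q a b (A : R -> 'M[R]_(p,q)) : mac a b A -> mac a b (fun s => (A s)^T)%R.
Proof.
move=> H i j.
have -> : (fun s => (A s)^T%R i j) = (fun s => A s j i).
  by apply: functional_extensionality => s; rewrite mxE.
exact: H.
Qed.

Lemma mac_deriv0 p q tau (F : R -> 'M[R]_(p,q)) N : 0 <= tau -> mac 0 tau F -> null_set N ->
  (forall t, 0 < t < tau -> ~ N t -> mderiv F t 0%R) -> forall t, 0 <= t <= tau -> F t = F 0.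
Proof.
move=> ht HF HN HD t Ht; apply/matrixP => i j.
apply: (ac_deriv0_on tau (fun s => F s i j) N) => // s Hs HNs.
by have := HD s Hs HNs i j; rewrite mxE.
Qed.

Lemma cv_mac m tau (Z : R -> vec) : vabs_cont m 0 tau Z -> mac 0 tau (fun s => cv m (Z s)).
Proof.
move=> HZ i j.
have -> : (fun s => cv m (Z s) i j) = (fun s => Z s i).
  by apply: functional_extensionality => s; rewrite mxE.
exact: HZ (ord_le i).
Qed.

Lemma cv_mderiv m (Z : R -> vec) t v :
  has_vderiv m Z t v -> mderiv (fun s => cv m (Z s)) t (cv m v).
Proof.
move=> HZ i j; rewrite (ord1 j) mxE.
apply: (derivable_pt_lim_ext (fun s => Z s i)); first by move=> s; rewrite mxE.
exact: HZ (ord_le i).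
Qed.

End MatrixCalculus.

Module Kinematics.
Import all_boot all_algebra Rstruct.
Import GRing.Theory.
Import MatrixCalculus.

Section Transport.

Variables (m : nat) (tau : R) (x0 : vec) (u : R -> vec) (Rm : R -> mat) (NR : R -> Prop).

Hypothesis tau_pos : 0 < tau.
Hypothesis x0_unit : ip m x0 x0 = 1.
Hypothesis u_perp : forall t, 0 <= t <= tau -> ip m (u t) x0 = 0.
Hypothesis Rm_ac : mabs_cont m 0 tau Rm.
Hypothesis Rm_init : forall i j, (i <= m)%coq_nat -> (j <= m)%coq_nat -> Rm 0 i j = idm i j.
Hypothesis NR_null : null_set NR.
Hypothesis Rm_deriv : forall t, 0 <= t <= tau -> ~ NR t ->
  forall i j, (i <= m)%coq_nat -> (j <= m)%coq_nat ->
    derivable_pt_lim (fun s => Rm s i j) t (matmul m (Rm t) (matmul m (Kmat (u t) x0) Jm) i j).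

Local Notation J := (mx m Jm).
Local Notation RR t := (mx m (Rm t)).
Local Notation X0 := (cv m x0).
Local Notation U t := (cv m (u t)).
Local Notation K t := (U t *m X0^T - X0 *m (U t)^T)%R.
Local Notation x := (fun t => mv m (Rm t) x0).

Lemma RR_init : RR 0 = 1%:M%R.
Proof. by rewrite -mx_idm; apply/matrixP => i j; rewrite !mxE Rm_init //; apply: ord_le. Qed.

Lemma RR_ac : mac 0 tau (fun t => RR t).
Proof.
move=> i j; have -> : (fun s => RR s i j) = (fun s => Rm s i j).
  by apply: functional_extensionality => s; rewrite mxE.
by apply: Rm_ac; apply: ord_le.
Qed.

Lemma RR_deriv t : 0 <= t <= tau -> ~ NR t -> mderiv (fun s => RR s) t (RR t *m (K t *m J))%R.
Proof.
move=> ht hn i j; apply: (derivable_pt_lim_ext (fun s => Rm s i j)).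
  by move=> s; rewrite mxE.
by rewrite -mx_Kmat -!mx_matmul mxE; apply: Rm_deriv => //; apply: ord_le.
Qed.

Lemma K_skew t : ((K t)^T = - K t)%R.
Proof. by rewrite linearB /= !trmx_mul !trmxK opprB. Qed.

(* K J x0 = u, since <x0,x0>_J = 1 and <u,x0>_J = 0. *)
Lemma K_x0 t : 0 <= t <= tau -> (K t *m J *m X0 = U t)%R.
Proof.
move=> ht.
have hX0 : (X0^T *m J *m X0 = 1%:M)%R by rewrite (mx11_scalar (_ *m _)) -ipE x0_unit.
have hU : ((U t)^T *m J *m X0 = 0)%R.
  by apply/matrixP => i j; rewrite !ord1 -ipE u_perp // mxE.
by rewrite !mulmxBl -!mulmxA (mulmxA X0^T) hX0 (mulmxA (U t)^T) hU mulmx1 mulmx0 subr0.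
Qed.

(* R J R^T is constant, since its derivative R (KJ J + J (KJ)^T) R^T = R (K - K) R^T
   vanishes; hence R J R^T = J. *)
Lemma RR_J_RRtr t : 0 <= t <= tau -> (RR t *m J *m (RR t)^T = J)%R.
Proof.
move=> ht.
have := @mac_deriv0 _ _ tau (fun s => RR s *m J *m (RR s)^T)%R NR (Rlt_le _ _ tau_pos).
rewrite RR_init mul1mx trmx1 mulmx1 => -> //.
- by apply: mac_mul; [lra| apply: mac_mul; [lra|exact: RR_ac|exact: mac_const]|
    apply: mac_tr; exact: RR_ac].
- move=> s hs hn; have hs' : 0 <= s <= tau by lra.
  have hd := mderiv_mul (mderiv_mul (RR_deriv s hs' hn) (mderiv_const J s))
    (mderiv_tr (RR_deriv s hs' hn)).
  suff <- : ((RR s *m (K s *m J) *m J + RR s *m 0) *m (RR s)^T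
            + RR s *m J *m (RR s *m (K s *m J))^T = 0)%R by [].
  rewrite mulmx0 addr0 !trmx_mul Jtr K_skew -!mulmxA (mulmxA J J) JJ mul1mx.
  by rewrite (mulmxA J J) JJ mul1mx mulNmx mulmxN addrN.
Qed.

Lemma RR_lorentz t : 0 <= t <= tau -> ((RR t)^T *m J *m RR t = J)%R.
Proof.
move=> ht.
have h1 : (RR t *m (J *m (RR t)^T *m J) = 1%:M)%R by rewrite !mulmxA RR_J_RRtr // JJ.
have h3 : (J *m (J *m (RR t)^T *m J *m RR t) = J)%R by rewrite (mulmx1C h1) mulmx1.
by rewrite !mulmxA JJ mul1mx in h3.
Qed.

Lemma RR_pullback t : 0 <= t <= tau -> (J *m (RR t)^T *m J *m RR t = 1%:M)%R.
Proof. by move=> ht; rewrite -!mulmxA (mulmxA (RR t)^T) RR_lorentz // JJ. Qed.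

Lemma transport_ip t (p q : 'cV[R]_m.+1) : 0 <= t <= tau ->
  ((RR t *m p)^T *m J *m (RR t *m q) = p^T *m J *m q)%R.
Proof. by move=> ht; rewrite trmx_mul -[in RHS](RR_lorentz t ht) !mulmxA. Qed.

Lemma transport_ac w : vabs_cont m 0 tau (fun t => mv m (Rm t) w).
Proof.
move=> i hi.
have -> : (fun t => mv m (Rm t) w i) = (fun t => (RR t *m cv m w)%R (inord i) ord0).
  by apply: functional_extensionality => t; rewrite mv_entry.
apply: (@mac_mul _ _ _ 0 tau (fun t => RR t) (fun _ => cv m w)); [lra|exact: RR_ac|exact: mac_const].
Qed.

Lemma transport_deriv w t : 0 <= t <= tau -> ~ NR t ->
  has_vderiv m (fun t => mv m (Rm t) w) t
    (fun i => (RR t *m (K t *m J) *m cv m w)%R (inord i) ord0).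
Proof.
move=> ht hn i hi.
apply: (derivable_pt_lim_ext (fun s => (RR s *m cv m w)%R (inord i) ord0)).
  by move=> s; rewrite mv_entry.
have := mderiv_mul (RR_deriv t ht hn) (mderiv_const (cv m w) t).
by rewrite mulmx0 addr0 => /(_ (inord i) ord0).
Qed.

Lemma transport_init w i : (i <= m)%coq_nat -> mv m (Rm 0) w i = w i.
Proof. by move=> hi; rewrite mv_entry // RR_init mul1mx cv_entry. Qed.

Lemma x_unit t : 0 <= t <= tau -> ((RR t *m X0)^T *m J *m (RR t *m X0) = 1%:M)%R.
Proof. by move=> ht; rewrite transport_ip // (mx11_scalar (_ *m _)) -ipE x0_unit. Qed.

(* For Y0 tangent at x0, (R Y0)' = R K J Y0 = -c R x0 with c = <u,Y0>_J,
   a normal vector, so the covariant derivative vanishes. *)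
Lemma tangent_transport Y0 : ip m Y0 x0 = 0 -> tangent_parallel m tau x (fun t => mv m (Rm t) Y0).
Proof.
move=> hY0.
have hY : ((cv m Y0)^T *m J *m X0 = 0)%R.
  by apply/matrixP => i j; rewrite !ord1 -ipE hY0 mxE.
split; [exact: transport_ac|split].
  by move=> t ht; rewrite ipE !cv_mv transport_ip // hY mxE.
exists NR; split => // t ht hn; eexists; split; first exact: transport_deriv.
move=> i hi; set c := ((U t)^T *m J *m cv m Y0)%R ord0 ord0.
have hM : (RR t *m (K t *m J) *m cv m Y0 = - c *: (RR t *m X0))%R.
  rewrite -!mulmxA !mulmxBl -!mulmxA (mulmxA X0^T) ipJ_sym hY (mulmxA (U t)^T).
  rewrite (mx11_scalar ((U t)^T *m J *m cv m Y0)%R) -/c mul_mx_scalar mulmx0 sub0r.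
  by rewrite scalemxAr scaleNr.
rewrite ipE cv_inord cv_mv hM mv_entry // linearZ /= -!scalemxAl x_unit // !mxE /=.
by rewrite mulr1 -!RmultE -RoppE; ring.
Qed.

(* For Psi0 = c x0, R Psi0 = c x stays normal and (R Psi0)' = c R u is tangent. *)
Lemma normal_transport Psi0 c : (forall i, (i <= m)%coq_nat -> Psi0 i = c * x0 i) ->
  normal_parallel m tau x (fun t => mv m (Rm t) Psi0).
Proof.
move=> hPsi0.
have hPc := cv_scal hPsi0.
split; [exact: transport_ac|split].
  move=> t ht; exists c => i hi.
  by rewrite !mv_entry // hPc -scalemxAr mxE.
exists NR; split => // t ht hn; eexists; split; first exact: transport_deriv.
move=> i hi; rewrite ipE cv_inord cv_mv hPc -scalemxAr -(mulmxA (RR t)) K_x0 //.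
rewrite linearZ /= -!scalemxAl transport_ip // ipJ_sym.
have -> : (X0^T *m J *m U t = 0)%R.
  by apply/matrixP => k j; rewrite !ord1 ipJ_sym -ipE u_perp // mxE.
by rewrite scaler0 mxE RmultE mul0r.
Qed.

(* Let Z be tangent along x with covariant derivative 0 at a good time s, so
   Z'(s) = a x(s) with a = <Z'(s), x(s)>_J.  Then the pulled-back field
   R^{-1} Z = J R^T J Z has derivative 0 at s. *)
Lemma tangent_pullback_deriv Z s v : 0 < s < tau -> ~ NR s ->
  (forall r, 0 <= r <= tau -> ip m (Z r) (x r) = 0) ->
  has_vderiv m Z s v -> (forall i, (i <= m)%coq_nat -> v i - ip m v (x s) * x s i = 0) ->
  mderiv (fun r => J *m (RR r)^T *m J *m cv m (Z r))%R s 0%R.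
Proof.
move=> hs hn hZt hv hvx; have hs' : 0 <= s <= tau by lra.
set a := ip m v (x s).
have hZd := cv_mderiv hv.
have hVa : (cv m v = a *: (RR s *m X0))%R.
  apply/matrixP => i j; rewrite (ord1 j) mxE [RHS]mxE -cv_mv mxE.
  have := hvx i (ord_le i); rewrite -/a -RmultE; lra.
(* differentiating <Z, x>_J = 0 gives <Z, R u>_J = -a *)
have hZU : ((cv m (Z s))^T *m J *m (RR s *m U s) = - a%:M)%R.
  have hFd := mderiv_mul (mderiv_mul (mderiv_tr hZd) (mderiv_const J s))
    (mderiv_mul (RR_deriv s hs' hn) (mderiv_const X0 s)).
  have hF0 r : 0 <= r <= tau ->
      ((cv m (Z r))^T *m J *m (RR r *m X0))%R ord0 ord0 = 0.
    by move=> hr; rewrite -cv_mv -ipE; apply: hZt.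
  have h0 := deriv_vanish _ _ _ _ _ (hFd ord0 ord0) hF0 hs.
  rewrite !mulmx0 !addr0 -!mulmxA (mulmxA (K s)) K_x0 // hVa linearZ /= in h0.
  rewrite -!scalemxAl !mulmxA -(mulmxA _ (RR s) X0) x_unit // in h0.
  apply/matrixP => i j; rewrite !ord1 mulmxA !mxE eqxx mulr1n.
  by move: h0; rewrite !mxE eqxx mulr1n mulr1 addrC => /eqP; rewrite addr_eq0 => /eqP.
have hXZ : ((RR s *m X0)^T *m J *m cv m (Z s) = 0)%R.
  by apply/matrixP => i j; rewrite !ord1 ipJ_sym -cv_mv -ipE hZt // mxE.
(* hence K R^{-1} Z = a x0, cancelling the part coming from R' *)
have hKZ : (K s *m ((RR s)^T *m (J *m cv m (Z s))) = a *: X0)%R.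
  rewrite !mulmxBl -!mulmxA.
  have e1 : (X0^T *m ((RR s)^T *m (J *m cv m (Z s))) = 0)%R.
    by rewrite !mulmxA -trmx_mul hXZ.
  have e2 : ((U s)^T *m ((RR s)^T *m (J *m cv m (Z s))) = - a%:M)%R.
    by rewrite !mulmxA -trmx_mul ipJ_sym hZU.
  by rewrite e1 e2 mulmx0 sub0r mulmxN opprK mul_mx_scalar.
have hEd := mderiv_mul (mderiv_mul (mderiv_mul (mderiv_const J s)
  (mderiv_tr (RR_deriv s hs' hn))) (mderiv_const J s)) hZd.
suff <- : ((((0 *m (RR s)^T + J *m (RR s *m (K s *m J))^T) *m J + J *m (RR s)^T *m 0)
   *m cv m (Z s)) + J *m (RR s)^T *m J *m cv m v = 0)%R by [].
rewrite mul0mx add0r mulmx0 addr0 hVa !trmx_mul Jtr K_skew -!mulmxA (mulmxA J J) JJ mul1mx.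
by rewrite mulNmx hKZ -!scalemxAr !mulmxA RR_pullback // mul1mx addNr.
Qed.

Lemma tangent_unique Y0 Z : tangent_parallel m tau x Z ->
  (forall i, (i <= m)%coq_nat -> Z 0 i = Y0 i) ->
  forall t i, 0 <= t <= tau -> (i <= m)%coq_nat -> Z t i = mv m (Rm t) Y0 i.
Proof.
move=> [hZac [hZt [NZ [HNZ hZd]]]] hZ0 t i ht hi.
have hconst := @mac_deriv0 _ _ tau (fun r => J *m (RR r)^T *m J *m cv m (Z r))%R
  (fun s => NR s \/ NZ s) (Rlt_le _ _ tau_pos).
have hE : (J *m (RR t)^T *m J *m cv m (Z t) = cv m Y0)%R.
  rewrite hconst //; last first.
  - move=> s hs hn; have hs' : 0 <= s <= tau by lra.
    have [v [hv hvx]] := hZd s hs' (fun h => hn (or_intror h)).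
    exact: tangent_pullback_deriv (fun h => hn (or_introl h)) hZt hv hvx.
  - exact: null_union.
  - apply: mac_mul; [lra| |exact: cv_mac].
    apply: mac_mul; [lra| |exact: mac_const].
    by apply: mac_mul; [lra|exact: mac_const|apply: mac_tr; exact: RR_ac].
  rewrite RR_init trmx1 mulmx1 JJ mul1mx.
  by apply/matrixP => k j; rewrite !mxE hZ0 //; apply: ord_le.
have hZ : cv m (Z t) = (RR t *m cv m Y0)%R.
  by rewrite -hE !mulmxA RR_J_RRtr // JJ mul1mx.
by rewrite mv_entry // -hZ cv_entry.
Qed.

(* For a normal field Psi = c x whose derivative is tangent at a good time s,
   the coefficient c = <Psi, x>_J has derivative <Psi', x>_J + c <x, R u>_J = 0. *)
Lemma normal_coeff_deriv Psi s v : 0 < s < tau -> ~ NR s ->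
  (forall r, 0 <= r <= tau -> exists c, forall i, (i <= m)%coq_nat -> Psi r i = c * x r i) ->
  has_vderiv m Psi s v -> (forall i, (i <= m)%coq_nat -> ip m v (x s) * x s i = 0) ->
  mderiv (fun r => (cv m (Psi r))^T *m J *m (RR r *m X0))%R s 0%R.
Proof.
move=> hs hn hPx hv hvx; have hs' : 0 <= s <= tau by lra.
have hvx0 : ip m v (x s) = 0.
  apply: (unit_scal_zero m (x s)) hvx.
  by rewrite ipE cv_mv x_unit // mxE.
have hV0 : ((cv m v)^T *m J *m (RR s *m X0) = 0)%R.
  by apply/matrixP => i j; rewrite !ord1 -cv_mv -ipE hvx0 mxE.
have [c hc] := hPx s hs'.
have hPc : (cv m (Psi s) = c *: (RR s *m X0))%R by rewrite (cv_scal hc) cv_mv.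
have hFd := mderiv_mul (mderiv_mul (mderiv_tr (cv_mderiv hv)) (mderiv_const J s))
  (mderiv_mul (RR_deriv s hs' hn) (mderiv_const X0 s)).
suff <- : (((cv m v)^T *m J + (cv m (Psi s))^T *m 0) *m (RR s *m X0)
   + (cv m (Psi s))^T *m J *m (RR s *m (K s *m J) *m X0 + RR s *m 0) = 0 :> 'M_1)%R
  by [].
rewrite !mulmx0 !addr0 hV0 add0r -(mulmxA (RR s)) K_x0 // hPc linearZ /= -!scalemxAl.
rewrite ipJ_sym transport_ip //.
have -> : ((U s)^T *m J *m X0 = 0)%R.
  by apply/matrixP => k j; rewrite !ord1 -ipE u_perp // mxE.
by rewrite scaler0.
Qed.

Lemma normal_unique Psi0 c0 Psi : (forall i, (i <= m)%coq_nat -> Psi0 i = c0 * x0 i) ->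
  normal_parallel m tau x Psi -> (forall i, (i <= m)%coq_nat -> Psi 0 i = Psi0 i) ->
  forall t i, 0 <= t <= tau -> (i <= m)%coq_nat -> Psi t i = mv m (Rm t) Psi0 i.
Proof.
move=> hPsi0 [hPac [hPx [NP [HNP hPd]]]] hP0 t i ht hi.
have hconst := @mac_deriv0 _ _ tau (fun r => (cv m (Psi r))^T *m J *m (RR r *m X0))%R
  (fun s => NR s \/ NP s) (Rlt_le _ _ tau_pos).
have hcoeff r c : 0 <= r <= tau -> (forall k, (k <= m)%coq_nat -> Psi r k = c * x r k) ->
    ((cv m (Psi r))^T *m J *m (RR r *m X0) = c%:M)%R.
  move=> hr hc.
  by rewrite (cv_scal hc) cv_mv linearZ /= -!scalemxAl x_unit // scale_scalar_mx mulr1.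
have [ct hct] := hPx t ht.
have h0 : 0 <= 0 <= tau by lra.
have : (ct%:M = c0%:M :> 'M[R]_1)%R.
  rewrite -(hcoeff t ct ht hct) -(hcoeff 0 c0 h0); last first.
    by move=> k hk; rewrite hP0 // hPsi0 // transport_init.
  apply: hconst => //.
  - apply: mac_mul; [lra| |apply: mac_mul; [lra|exact: RR_ac|exact: mac_const]].
    by apply: mac_mul; [lra|apply: mac_tr; exact: cv_mac|exact: mac_const].
  - exact: null_union.
  - move=> s hs hn; have hs' : 0 <= s <= tau by lra.
    have [v [hv hvx]] := hPd s hs' (fun h => hn (or_intror h)).
    exact: normal_coeff_deriv (fun h => hn (or_introl h)) hPx hv hvx.
move/matrixP/(_ ord0 ord0); rewrite !mxE /= !mulr1n => hc.
rewrite hct // hc !mv_entry // (cv_scal hPsi0) -scalemxAr [RHS]mxE; reflexivity.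
Qed.

End Transport.
End Kinematics.

Theorem mainTheorem3 (m : nat) (tau : R) (x0 : vec) (u : R -> vec)
  (Rm : R -> mat) (Y0 Psi0 : vec) :
  0 < tau ->
  ip m x0 x0 = 1 ->
  vabs_cont m 0 tau u ->
  (forall t, 0 <= t <= tau -> ip m (u t) x0 = 0) ->
  mabs_cont m 0 tau Rm ->
  (forall i j, (i <= m)%nat -> (j <= m)%nat -> Rm 0 i j = idm i j) ->
  ae_on 0 tau (fun t => forall i j, (i <= m)%nat -> (j <= m)%nat ->
      derivable_pt_lim (fun s => Rm s i j) t
        (matmul m (Rm t) (matmul m (Kmat (u t) x0) Jm) i j)) ->
  ip m Y0 x0 = 0 ->
  (exists c, forall i, (i <= m)%nat -> Psi0 i = c * x0 i) ->
  let x := fun t => mv m (Rm t) x0 in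
  ((tangent_parallel m tau x (fun t => mv m (Rm t) Y0) /\
    (forall i, (i <= m)%nat -> mv m (Rm 0) Y0 i = Y0 i)) /\
   (forall Z, tangent_parallel m tau x Z ->
      (forall i, (i <= m)%nat -> Z 0 i = Y0 i) ->
      forall t i, 0 <= t <= tau -> (i <= m)%nat -> Z t i = mv m (Rm t) Y0 i))
  /\
  ((normal_parallel m tau x (fun t => mv m (Rm t) Psi0) /\
    (forall i, (i <= m)%nat -> mv m (Rm 0) Psi0 i = Psi0 i)) /\
   (forall Psi, normal_parallel m tau x Psi ->
      (forall i, (i <= m)%nat -> Psi 0 i = Psi0 i) ->
      forall t i, 0 <= t <= tau -> (i <= m)%nat -> Psi t i = mv m (Rm t) Psi0 i)).
Proof.
  intros Htau Hx0 _ Hu HRac HR0 [NR [HNR HRd]] HY0 [c0 HPsi0] x.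
  split; split.
  - split; [eapply Kinematics.tangent_transport; eassumption|].
    intros i Hi. eapply Kinematics.transport_init; eassumption.
  - intros Z. eapply Kinematics.tangent_unique; eassumption.
  - split; [eapply Kinematics.normal_transport; eassumption|].
    intros i Hi. eapply Kinematics.transport_init; eassumption.
  - intros Psi. eapply Kinematics.normal_unique; eassumption.
Qed.
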